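(* Let $f:\mathbb{Z}\to\mathbb{R}^{+}$ be a function such that $\|f'\|_{\infty}<\infty$ and $\widetilde{M}f$ is not identically $+\infty$. Then $\widetilde{M}f(n)<\infty$ for all $n\in\mathbb{Z}$.
   Context: For $f:\mathbb{Z}\to\mathbb{R}$, the uncentered discrete Hardy–Littlewood maximal function is $\widetilde{M}f(n)=\sup_{r,s\in\mathbb{Z}_{\ge 0}}\frac{1}{r+s+1}\sum_{k=-s}^{r}|f(n+k)|$ (possibly $+\infty$). For $g:\mathbb{Z}\to\mathbb{R}$, $g'(n)=g(n+1)-g(n)$ and $\|g\|_\infty=\sup_{n\in\mathbb{Z}}|g(n)|$. *)

From Stdlib Require Import Reals ZArith Lra Lia.
Open Scope R_scope.

(* sum_{k=-s}^{r} |f(n+k)|  (r, s >= 0), as a sum over j = 0 .. r+s of |f(n - s + j)| *)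
Definition window_sum (f : Z -> R) (n : Z) (r s : nat) : R :=
  sum_f_R0 (fun j => Rabs (f (n - Z.of_nat s + Z.of_nat j)%Z)) (r + s).

Definition window_avg (f : Z -> R) (n : Z) (r s : nat) : R :=
  window_sum f n r s / INR (r + s + 1).

(* \widetilde{M} f (n) < +oo : the supremum over r,s >= 0 of the averages is finite,
   i.e. the set of averages is bounded above. *)
Definition unc_maximal_finite (f : Z -> R) (n : Z) : Prop :=
  exists B : R, forall r s : nat, window_avg f n r s <= B.

Definition dderiv (g : Z -> R) (n : Z) : R := g (n + 1)%Z - g n.

Definition bounded_Z (g : Z -> R) : Prop :=
  exists C : R, forall n : Z, Rabs (g n) <= C.

From Stdlib Require Import Reals ZArith.
From Stdlib Require Import Lra Lia.
Open Scope R_scope.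

(* Every window [n - s, n + r] lies inside the window [n0 - s - d, n0 + r + d]
   with d = |n - n0|, which is at most 2d + 1 times longer.  Hence
   M~f(n) <= (2d + 1) M~f(n0), so finiteness at one point gives finiteness
   everywhere. *)

Lemma sum_f_R0_le_extend (h : nat -> R) (N M : nat) :
  (forall i, 0 <= h i) -> (N <= M)%nat -> sum_f_R0 h N <= sum_f_R0 h M.
Proof.
  intros h_ge0 le_NM.
  induction le_NM as [|M _ IH]; simpl.
  - lra.
  - specialize (h_ge0 (S M)); lra.
Qed.

Lemma sum_f_R0_shift_le (k : nat) :
  forall (h : nat -> R) (N M : nat), (forall i, 0 <= h i) -> (N + k <= M)%nat ->
  sum_f_R0 (fun j => h (k + j)%nat) N <= sum_f_R0 h M.
Proof.
  induction k as [|k IH]; intros h N M h_ge0 le_NkM.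
  - apply sum_f_R0_le_extend; [exact h_ge0 | lia].
  - rewrite (decomp_sum h M) by lia.
    assert (IHk := IH (fun i => h (S i)) N (pred M) (fun i => h_ge0 (S i)) ltac:(lia)).
    specialize (h_ge0 0%nat); simpl in IHk |- *; lra.
Qed.

Lemma window_sum_ge0 (f : Z -> R) (n : Z) (r s : nat) : 0 <= window_sum f n r s.
Proof. apply cond_pos_sum; intro; apply Rabs_pos. Qed.

Lemma window_avg_ge0 (f : Z -> R) (n : Z) (r s : nat) : 0 <= window_avg f n r s.
Proof.
  apply Rmult_le_pos; [apply window_sum_ge0|].
  left; apply Rinv_0_lt_compat, lt_0_INR; lia.
Qed.

Lemma window_sum_le_subwindow (f : Z -> R) (n n0 : Z) (r s r0 s0 : nat) :
  (n0 - Z.of_nat s0 <= n - Z.of_nat s)%Z ->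
  (n + Z.of_nat r <= n0 + Z.of_nat r0)%Z ->
  window_sum f n r s <= window_sum f n0 r0 s0.
Proof.
  intros le_left le_right.
  set (k := Z.to_nat (n - Z.of_nat s - (n0 - Z.of_nat s0))).
  unfold window_sum.
  rewrite (sum_eq _ (fun j => Rabs (f (n0 - Z.of_nat s0 + Z.of_nat (k + j))%Z))).
  - apply (sum_f_R0_shift_le k (fun i => Rabs (f (n0 - Z.of_nat s0 + Z.of_nat i)%Z))).
    + intro; apply Rabs_pos.
    + lia.
  - intros j _; do 2 f_equal; lia.
Qed.

Lemma window_avg_le_enlarged (f : Z -> R) (n n0 : Z) (d r s : nat) :
  (Z.abs (n - n0) <= Z.of_nat d)%Z ->
  window_avg f n r s <= INR (2 * d + 1) * window_avg f n0 (r + d) (s + d).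
Proof.
  intro dist_nn0.
  assert (sum_le : window_sum f n r s <= window_sum f n0 (r + d) (s + d))
    by (apply window_sum_le_subwindow; lia).
  assert (len_le : INR (r + d + (s + d) + 1) <= INR (2 * d + 1) * INR (r + s + 1))
    by (rewrite <- mult_INR; apply le_INR; nia).
  assert (len_pos : 0 < INR (r + s + 1)) by (apply lt_0_INR; lia).
  assert (len0_pos : 0 < INR (r + d + (s + d) + 1)) by (apply lt_0_INR; lia).
  assert (avg0_ge0 := window_avg_ge0 f n0 (r + d) (s + d)).
  assert (sum0_eq : window_sum f n0 (r + d) (s + d)
                    = window_avg f n0 (r + d) (s + d) * INR (r + d + (s + d) + 1))
    by (unfold window_avg; field; lra).
  set (A0 := window_avg f n0 (r + d) (s + d)) in *.
  unfold window_avg; apply (Rmult_le_reg_r (INR (r + s + 1))); [exact len_pos|].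
  unfold Rdiv; rewrite Rmult_assoc, Rinv_l, Rmult_1_r by lra.
  rewrite (Rmult_comm (INR (2 * d + 1))), Rmult_assoc.
  apply (Rle_trans _ _ _ sum_le); rewrite sum0_eq.
  apply Rmult_le_compat_l; assumption.
Qed.

Lemma unc_maximal_finite_transfer (f : Z -> R) (n0 n : Z) :
  unc_maximal_finite f n0 -> unc_maximal_finite f n.
Proof.
  intros [B avg_le_B].
  set (d := Z.abs_nat (n - n0)).
  exists (INR (2 * d + 1) * B); intros r s.
  eapply Rle_trans.
  - apply (window_avg_le_enlarged f n n0 d); unfold d; lia.
  - apply Rmult_le_compat_l; [apply pos_INR | apply avg_le_B].
Qed.

Theorem lemma5p3 (f : Z -> R)
  (hpos : forall n : Z, 0 < f n)
  (hderiv : bounded_Z (dderiv f))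
  (hnotinf : exists n0 : Z, unc_maximal_finite f n0) :
  forall n : Z, unc_maximal_finite f n.
Proof.
  intro n; destruct hnotinf as [n0 finite_n0].
  exact (unc_maximal_finite_transfer f n0 n finite_n0).
Qed.
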